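(* Let $\pi_L$ be a uniformizer for $L$ and choose a uniformizer $\pi_K$ for $K$ with $\pi_K\equiv\pi_L^n\pmod{\pi_L^{n+1}}$. Let $e\ge1$ be an integer relatively prime to $pn$, let $\pi_{K_e}\in K^{sep}$ be a root of $X^e-\pi_K$, and set $K_e=K(\pi_{K_e})$, $L_e=LK_e$. Then: (1) $K_e/K$ and $L_e/L$ are totally ramified extensions of degree $e$; (2) there is a uniformizer $\pi_{L_e}$ of $L_e$ with $\pi_{L_e}^e=\pi_L$ and $\pi_{L_e}^n\equiv\pi_{K_e}\pmod{\pi_{L_e}^{n+1}}$; (3) if $F(X)\in X^n\cdot\mathcal{O}_K[[X]]$ satisfies $F(\pi_L)=\pi_K$, then there is a power series $F_e(X)=F(X^e)^{1/e}$ with coefficients in $\mathcal{O}_K$ (i.e. $F_e(X)\in\mathcal{O}_K[[X]]$ with $F_e(X)^e=F(X^e)$) such that $F_e(\pi_{L_e})=\pi_{K_e}$, where $\pi_{L_e}$ is as in (2).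
   Context: $p$ is a prime and $K$ is a field complete with respect to a discrete valuation, with perfect residue field of characteristic $p$; $K^{sep}$ is a fixed separable closure and $\mathcal{O}_K$ is the valuation ring of $K$. $L/K$ is a finite totally ramified subextension of $K^{sep}/K$ of degree $n=[L:K]>1$. *)

From HB Require Import structures.
From mathcomp Require Import all_boot all_order all_algebra all_field.
Set Implicit Arguments. Unset Strict Implicit. Unset Printing Implicit Defensive.
Import Order.TTheory GRing.Theory Num.Theory.
Local Open Scope ring_scope.

(* A valuation on a field E is modelled by v : E -> rat; the value v 0 is
   irrelevant (by convention v 0 = +oo), hence the predicates below. *)
Section Valued.
Variable E : fieldType.
Variable v : E -> rat.

Definition val_ge (x : E) (r : rat) : Prop := x = 0 \/ r <= v x.
Definition val_gt (x : E) (r : rat) : Prop := x = 0 \/ r < v x.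

Definition is_valuation : Prop :=
  (forall x y, x != 0 -> y != 0 -> v (x * y) = v x + v y) /\
  (forall x y, x != 0 -> y != 0 -> x + y != 0 -> Num.min (v x) (v y) <= v (x + y)).

Definition v_cauchy (u : nat -> E) : Prop :=
  forall r : rat, exists M, forall i j, (M <= i)%N -> (M <= j)%N -> val_ge (u i - u j) r.
Definition v_converges_to (u : nat -> E) (l : E) : Prop :=
  forall r : rat, exists M, forall i, (M <= i)%N -> val_ge (u i - l) r.
Definition v_series_to (a : nat -> E) (s : E) : Prop :=
  v_converges_to (fun N => \sum_(i < N) a i) s.
End Valued.

Section Ext.
Variables (K : fieldType) (E : fieldExtType K) (v : E -> rat).

Definition uniformizer (F : {subfield E}) (x : E) : Prop :=
  [/\ x \in F, x != 0, 0 < v x &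
      forall y, y \in F -> val_gt v y 0 ->
        exists2 z, z \in F & val_ge v z 0 /\ y = x * z].

Definition congr_mod (F : {subfield E}) (a b m : E) : Prop :=
  exists2 z, z \in F & val_ge v z 0 /\ a - b = m * z.

(* F2 / F1 is totally ramified of degree d: [F2 : F1] = d and the
   ramification index e(F2/F1) (defined by v(pi_1) = e * v(pi_2) for
   uniformizers pi_1, pi_2 of F1, F2) equals d. *)
Definition totally_ramified (F1 F2 : {subfield E}) (d : nat) : Prop :=
  [/\ (F1 <= F2)%VS, \dim_F1 F2 = d &
      exists pi1 pi2, [/\ uniformizer F1 pi1, uniformizer F2 pi2 &
                          v pi1 = d%:R * v pi2]].

(* v restricted to K is a (normalized) discrete valuation, K is complete,
   and its residue field is perfect of characteristic p. *)
Definition complete_dvf_perfect_residue (p : nat) : Prop :=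
  [/\ is_valuation v,
      (forall a : K, a != 0 -> exists z : int, v (a%:A) = z%:~R) /\
      (exists a : K, a != 0 /\ v (a%:A) = 1),
      (forall u : nat -> K, v_cauchy v (fun i => (u i)%:A) ->
          exists l : K, v_converges_to v (fun i => (u i)%:A) l%:A),
      val_gt v (p%:R : E) 0 &
      (forall a : K, val_ge v a%:A 0 ->
          exists2 b : K, val_ge v b%:A 0 & val_gt v (a%:A - (b%:A) ^+ p) 0)].
End Ext.

(* formal power series over K as coefficient sequences *)
Section PS.
Variable K : fieldType.
Definition ps_one : nat -> K := fun k => (k == 0%N)%:R.
Definition ps_mul (f g : nat -> K) : nat -> K :=
  fun k => \sum_(i < k.+1) f i * g (k - i)%N.
Definition ps_exp (f : nat -> K) (m : nat) : nat -> K := iter m (ps_mul f) ps_one.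
Definition ps_subst_pow (F : nat -> K) (e : nat) : nat -> K :=
  fun k => if (e %| k)%N then F (k %/ e)%N else 0.
End PS.

From mathcomp Require Import all_boot all_order all_algebra all_field.
From mathcomp Require Import ring lra zify.
From Stdlib Require Import ClassicalEpsilon FunctionalExtensionality.
Set Implicit Arguments. Unset Strict Implicit. Unset Printing Implicit Defensive.
Import Order.TTheory GRing.Theory Num.Theory.
Local Open Scope ring_scope.

(* Write [piK = u * piL^n]; the congruence makes [u] a 1-unit of [L], and as
   [e] is prime to [p] it has an e-th root [y] in [L] (Hensel).  With Bezout
   [a n = b e + 1], the element [piLe = piKe^a / (y^a piL^b)] satisfies
   [piLe^e = piL] and [piLe^n = piKe / y].  Its valuation [1/(ne)] forces
   [[L_e : K] >= ne], which gives (1), and [y] is a 1-unit, which gives (2).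
   For (3), [F(X^e) = X^(ne) H(X)] with [H(0) = F_n] a 1-unit, so [H] has an
   e-th root computed coefficientwise, dividing only by [e] times a unit; its
   partial sums [s] at [piLe] satisfy [s = piKe] up to a 1-unit factor and
   [s^e -> piK], which pins [s] down to [piKe]. *)

Section Valuation.
Variables (E : fieldType) (v : E -> rat).
Hypothesis hv : is_valuation v.

Lemma vM x y : x != 0 -> y != 0 -> v (x * y) = v x + v y.
Proof. by case: hv => h _; apply: h. Qed.

Lemma v1 : v 1 = 0.
Proof. by have := vM (oner_neq0 E) (oner_neq0 E); rewrite mulr1; lra. Qed.

Lemma vN1 : v (-1) = 0.
Proof.
have nN1 : (-1 : E) != 0 by rewrite oppr_eq0 oner_neq0.
by have := vM nN1 nN1; rewrite mulrNN mulr1 v1; lra.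
Qed.

Lemma vN x : x != 0 -> v (- x) = v x.
Proof. by move=> nx; rewrite -mulN1r vM ?vN1 ?add0r // oppr_eq0 oner_neq0. Qed.

Lemma vV x : x != 0 -> v x^-1 = - v x.
Proof. by move=> nx; have := vM nx (invr_neq0 nx); rewrite divff // v1; lra. Qed.

Lemma vX x k : x != 0 -> v (x ^+ k) = k%:R * v x.
Proof.
move=> nx; elim: k => [|k ih]; first by rewrite expr0 v1 mul0r.
by rewrite exprS vM ?expf_neq0 // ih -add1n natrD mulrDl mul1r.
Qed.

Lemma addr_neq0_val x y : x != 0 -> v x != v y -> x + y != 0.
Proof.
move=> nx; apply: contra_neq => /eqP; rewrite addr_eq0 => /eqP xE.
by move: nx; rewrite xE oppr_eq0 => ny; rewrite vN.
Qed.

Lemma vD_strict x y : x != 0 -> y != 0 -> v x < v y -> v (x + y) = v x.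
Proof.
move=> nx ny lt_xy; case: hv => _ ultra.
have nxy : x + y != 0 by rewrite addr_neq0_val // lt_eqF.
apply/eqP; rewrite eq_le; apply/andP; split; last first.
  by have := ultra _ _ nx ny nxy; rewrite (min_idPl (ltW lt_xy)).
have nNy : - y != 0 by rewrite oppr_eq0.
have := ultra _ _ nxy nNy; rewrite addrK => /(_ nx).
by rewrite ge_min vN //; case/orP => // h; move: h lt_xy; lra.
Qed.

Lemma val_geW x r s : val_ge v x r -> s <= r -> val_ge v x s.
Proof. by case=> [->|h] hs; [left|right; apply: le_trans h]. Qed.

Lemma val_ge_val x : val_ge v x (v x). Proof. by right. Qed.

Lemma val_gt_ge x : val_gt v x 0 -> exists2 d, 0 < d & val_ge v x d.
Proof. by case=> [->|h]; [exists 1 => //; left | exists (v x) => //; right]. Qed.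

Lemma val_geD x y r : val_ge v x r -> val_ge v y r -> val_ge v (x + y) r.
Proof.
case: hv => _ ultra.
case=> [->|hx]; first by rewrite add0r.
case=> [->|hy]; first by rewrite addr0; right.
have [->|nx] := eqVneq x 0; first by rewrite add0r; right.
have [->|ny] := eqVneq y 0; first by rewrite addr0; right.
have [->|nxy] := eqVneq (x + y) 0; first by left.
by right; apply: le_trans (ultra _ _ nx ny nxy); rewrite le_min hx hy.
Qed.

Lemma val_geN x r : val_ge v x r -> val_ge v (- x) r.
Proof.
have [->|nx] := eqVneq x 0; first by rewrite oppr0; left.
by case=> [x0|h]; [move: nx; rewrite x0 eqxx | right; rewrite vN].
Qed.

Lemma val_geB x y r : val_ge v x r -> val_ge v y r -> val_ge v (x - y) r.
Proof. by move=> hx hy; apply: val_geD hx (val_geN hy). Qed.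

Lemma val_geM x y r s : val_ge v x r -> val_ge v y s -> val_ge v (x * y) (r + s).
Proof.
have [->|nx] := eqVneq x 0; first by rewrite mul0r; left.
have [->|ny] := eqVneq y 0; first by rewrite mulr0; left.
case=> [x0|hx]; first by move: nx; rewrite x0 eqxx.
case=> [y0|hy]; first by move: ny; rewrite y0 eqxx.
by right; rewrite vM // lerD.
Qed.

Lemma val_geMr x y r : val_ge v x r -> val_ge v y 0 -> val_ge v (x * y) r.
Proof. by move=> hx hy; have := val_geM hx hy; rewrite addr0. Qed.

Lemma val_ge1 : val_ge v 1 0. Proof. by right; rewrite v1. Qed.

Lemma val_ge_nat m : val_ge v (m%:R : E) 0.
Proof.
elim: m => [|m ih]; first by left.
by rewrite -addn1 natrD; apply: val_geD ih val_ge1.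
Qed.

Lemma val_geX x k r : val_ge v x r -> val_ge v (x ^+ k) (k%:R * r).
Proof.
move=> h; elim: k => [|k ih]; first by rewrite expr0 mul0r; exact: val_ge1.
by rewrite exprS -add1n natrD mulrDl mul1r; apply: val_geM.
Qed.

Lemma val_geX0 x k : val_ge v x 0 -> val_ge v (x ^+ k) 0.
Proof. by move=> h; have := val_geX k h; rewrite mulr0. Qed.

Lemma val_ge_sum (I : Type) (s : seq I) (P : pred I) (F : I -> E) r :
  (forall i, P i -> val_ge v (F i) r) -> val_ge v (\sum_(i <- s | P i) F i) r.
Proof.
move=> h; apply: (big_ind (fun x => val_ge v x r)); first by left.
  by move=> x y; apply: val_geD.
exact: h.
Qed.

Lemma val_ge_div x y r : val_ge v x r -> y != 0 -> val_ge v (x / y) (r - v y).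
Proof. by move=> hx ny; have := val_geM hx (val_ge_val y^-1); rewrite vV. Qed.

Lemma val_ge_mulX a x i : x != 0 -> val_ge v a 0 -> val_ge v (a * x ^+ i) (i%:R * v x).
Proof. by move=> nx ha; have := val_geM ha (val_ge_val (x ^+ i)); rewrite add0r vX. Qed.

Lemma val_ge_div_sub1 x y r : y != 0 -> val_ge v (x - y) r -> val_ge v (x / y - 1) (r - v y).
Proof.
move=> ny hxy; have -> : x / y - 1 = (x - y) / y by field.
exact: val_ge_div.
Qed.

Lemma val_ge_eq0 x : (forall r, val_ge v x r) -> x = 0.
Proof.
move=> h; have [//|nx] := eqVneq x 0.
by case: (h (v x + 1)) => // hh; exfalso; move: hh; lra.
Qed.

Lemma val_sum_min (I : eqType) (r : seq I) (f : I -> E) :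
  uniq r -> r != [::] -> {in r, forall i, f i != 0} ->
  {in r &, forall i j, v (f i) = v (f j) -> i = j} ->
  \sum_(i <- r) f i != 0 /\
  exists2 i, i \in r & v (\sum_(i <- r) f i) = v (f i) /\ {in r, forall j, v (f i) <= v (f j)}.
Proof.
elim: r => [//|x r ih] /= /andP [xr ur] _ nz inj.
have nzx : f x != 0 by apply: nz; rewrite mem_head.
have [-> | r0] := eqVneq r [::].
  rewrite big_seq1; split=> //; exists x; rewrite ?mem_head //.
  by split=> // j; rewrite mem_seq1 => /eqP ->.
have nzr : {in r, forall j, f j != 0} by move=> j jr; apply: nz; rewrite inE jr orbT.
have injr : {in r &, forall j k, v (f j) = v (f k) -> j = k}.
  by move=> j k jr kr; apply: inj; rewrite inE ?jr ?kr orbT.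
have [ns [i ir [vs hmin]]] := ih ur r0 nzr injr.
rewrite big_cons; set s := \sum_(j <- r) f j in ns vs *.
have vxs : v (f x) != v s.
  rewrite vs; apply: contraNneq xr => /inj -> //; by rewrite ?mem_head ?inE ?ir ?orbT.
split; first exact: addr_neq0_val.
case: (ltgtP (v (f x)) (v s)) vxs => // lt_xs _.
- exists x; rewrite ?mem_head //; split; first exact: vD_strict.
  move=> j; rewrite inE => /orP [/eqP -> // | jr].
  by apply: le_trans (ltW lt_xs) _; rewrite vs hmin.
- exists i; rewrite ?inE ?ir ?orbT //; split; first by rewrite addrC vD_strict // -vs.
  move=> j; rewrite inE => /orP [/eqP -> | jr]; last exact: hmin.
  by rewrite -vs ltW.
Qed.

Lemma val_ge_telescope (x : nat -> E) d i j : 0 <= d -> (i <= j)%N ->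
  (forall k, val_ge v (x k.+1 - x k) (k.+1%:R * d)) -> val_ge v (x j - x i) (i.+1%:R * d).
Proof.
move=> d0 ij hx; rewrite -telescope_sumr // big_nat_cond.
apply: val_ge_sum => k /andP [/andP [ik _] _]; apply: val_geW (hx k) _.
by rewrite ler_wpM2r // ler_nat ltnS.
Qed.

(* A 1-unit is an element [t] with [v (t - 1) >= d] for some [d > 0]. *)
Lemma val_ge0_1unit t d : 0 <= d -> val_ge v (t - 1) d -> val_ge v t 0.
Proof. by move=> d0 h; have := val_geD (val_geW h d0) val_ge1; rewrite subrK. Qed.

Lemma val_1unit t d : 0 < d -> val_ge v (t - 1) d -> t != 0 /\ v t = 0.
Proof.
move=> d0 ht.
have nt : t != 0.
  apply/eqP => t0; move: ht; rewrite t0 sub0r.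
  by case=> [/eqP|]; [rewrite oppr_eq0 oner_eq0 | rewrite vN1; lra].
split => //; have [t1|nt1] := eqVneq (t - 1) 0.
  by move/eqP: t1; rewrite subr_eq0 => /eqP ->; rewrite v1.
have -> : t = 1 + (t - 1) by rewrite addrC subrK.
case: ht => [t1|ht]; first by move: nt1; rewrite t1 eqxx.
by rewrite vD_strict ?oner_neq0 ?v1 //; lra.
Qed.

Lemma val_ge_1unitM t s d : 0 <= d -> val_ge v (t - 1) d -> val_ge v (s - 1) d ->
  val_ge v (t * s - 1) d.
Proof.
move=> d0 ht hs; have -> : t * s - 1 = (t - 1) * s + (s - 1) by ring.
by apply: val_geD => //; apply: val_geMr ht (val_ge0_1unit d0 hs).
Qed.

Lemma val_ge_1unitX t k d : 0 <= d -> val_ge v (t - 1) d -> val_ge v (t ^+ k - 1) d.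
Proof.
move=> d0 ht; elim: k => [|k ih]; first by rewrite expr0 subrr; left.
by rewrite exprS; apply: val_ge_1unitM.
Qed.

Lemma val_ge_subX x y k r : val_ge v x 0 -> val_ge v y 0 -> val_ge v (x - y) r ->
  val_ge v (x ^+ k - y ^+ k) r.
Proof.
move=> hx hy hxy; rewrite subrXX; apply: val_geMr hxy _.
by apply: val_ge_sum => i _; rewrite -[0]addr0; apply: val_geM; apply: val_geX0.
Qed.

(* [s^e - x^e = x^e (t - 1) (1 + t + ... + t^(e-1))] with [t = s / x], and the
   last factor is [e] times a 1-unit. *)
Lemma val_ge_sub_of_subX (e : nat) x s d r : (e%:R : E) != 0 -> v e%:R = 0 -> x != 0 ->
  0 < d -> val_ge v (s / x - 1) d -> val_ge v (s ^+ e - x ^+ e) r ->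
  val_ge v (s - x) (r - e%:R * v x + v x).
Proof.
move=> ne ve nx d0 t1 hse; set t := s / x in t1.
have sE : s = x * t by rewrite /t mulrC divfK.
set S := \sum_(i < e) t ^+ i.
have S1 : val_ge v (S / e%:R - 1) d.
  have -> : S / e%:R - 1 = (S - \sum_(i < e) 1) / e%:R.
    by rewrite sumr_const card_ord; field.
  have : val_ge v (\sum_(i < e) (t ^+ i - 1)) d.
    by apply: val_ge_sum => i _; apply: val_ge_1unitX (ltW d0) t1.
  by rewrite -sumrB => /val_ge_div /(_ ne); rewrite ve subr0.
have [nSe vSe] := val_1unit d0 S1.
have nS : S != 0 by apply: contraNneq nSe => ->; rewrite mul0r.
have vS : v S = 0 by rewrite -(divfK ne S) vM // vSe ve addr0.
have -> : s - x = x * ((s ^+ e - x ^+ e) / (x ^+ e * S)).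
  have -> : s ^+ e - x ^+ e = x ^+ e * ((t - 1) * S) by rewrite /S -subrX1 sE exprMn; ring.
  by rewrite sE; field; rewrite nS expf_neq0.
have := val_geM (val_ge_val x) (val_ge_div hse (mulf_neq0 (expf_neq0 e nx) nS)).
by rewrite vM ?expf_neq0 // vX // vS addr0 => h; apply: val_geW h _; lra.
Qed.

(* Bezout writes [1] as a combination of [e] and [p], and [p] lies in the
   maximal ideal. *)
Lemma val_nat_coprime (e p : nat) : (0 < e)%N -> coprime e p -> val_gt v (p%:R : E) 0 ->
  (e%:R : E) != 0 /\ v e%:R = 0.
Proof.
move=> e0 cop hp; case: (egcdnP p e0) => km kn hk _.
move: cop; rewrite /coprime => /eqP g1; rewrite g1 in hk.
have bezout : (1 : E) = e%:R * km%:R - p%:R * kn%:R.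
  have h : ((km * e)%:R : E) = (kn * p + 1)%:R by rewrite hk.
  by move: h; rewrite !natrM natrD => h; rewrite mulrC h; ring.
have not_in_ideal : ~ val_gt v (e%:R : E) 0.
  move=> he; case: (val_gt_ge he) => d2 d20 hd2; case: (val_gt_ge hp) => d3 d30 hd3.
  have hm : 0 < Num.min d2 d3 by rewrite lt_min d20 d30.
  have m2 : Num.min d2 d3 <= d2 by rewrite ge_min lexx.
  have m3 : Num.min d2 d3 <= d3 by rewrite ge_min lexx orbT.
  have := val_geB (val_geMr (val_geW hd2 m2) (val_ge_nat km))
                  (val_geMr (val_geW hd3 m3) (val_ge_nat kn)).
  by rewrite -bezout; case=> [/eqP|]; [rewrite oner_eq0 | rewrite v1; lra].
have ne : (e%:R : E) != 0 by apply: contra_notN not_in_ideal => /eqP ->; left.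
split => //; case: (val_ge_nat e) => [e0'|hge]; first by move: ne; rewrite e0' eqxx.
by apply/eqP; rewrite eq_le hge andbT leNgt; apply/negP => he; apply: not_in_ideal; right.
Qed.

End Valuation.

Lemma intr_frac_inj (z1 z2 : int) (i m N : nat) : (i < N)%N -> (m < N)%N ->
  z1%:~R + i%:R / N%:R = z2%:~R + m%:R / N%:R :> rat -> i = m.
Proof.
move=> iN mN h.
have nN : (N%:R : rat) != 0 by rewrite pnatr_eq0 -lt0n (leq_ltn_trans _ iN).
have : ((z1 * N%:Z + i%:Z)%:~R : rat) = (z2 * N%:Z + m%:Z)%:~R.
  rewrite !rmorphD !rmorphM /=.
  have -> : (z1%:~R * N%:R + i%:R : rat) = (z1%:~R + i%:R / N%:R) * N%:R by field.
  by rewrite h; field.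
move/intr_inj => hz; have : ((z1 - z2) * N%:Z = m%:Z - i%:Z)%R by rewrite mulrBl; lia.
case: (ltrgtP z1 z2) => hz12.
- have : ((z1 - z2) * N%:Z <= -1 * N%:Z)%R by apply: ler_wpM2r => //; lia.
  lia.
- have : (1 * N%:Z <= (z1 - z2) * N%:Z)%R by apply: ler_wpM2r => //; lia.
  lia.
- by rewrite hz12 subrr mul0r; lia.
Qed.

Lemma intr_frac_ge_inv (z : int) (i N : nat) : (0 < N)%N ->
  0 < z%:~R + i%:R / N%:R :> rat -> N%:R^-1 <= z%:~R + i%:R / N%:R :> rat.
Proof.
move=> N0 h; have N0R : (0 : rat) < N%:R by rewrite ltr0n.
have -> : z%:~R + i%:R / N%:R = (z * N%:Z + i%:Z)%:~R / N%:R :> rat.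
  by rewrite !rmorphD !rmorphM /=; field; lra.
rewrite -[X in X <= _]mul1r ler_pM2r ?invr_gt0 //.
have : (0 : rat) < (z * N%:Z + i%:Z)%:~R.
  rewrite !rmorphD !rmorphM /=.
  have -> : (z%:~R * N%:R + i%:R : rat) = (z%:~R + i%:R / N%:R) * N%:R by field; lra.
  exact: mulr_gt0.
by rewrite ltr0z -[1 : rat]/((1 : int)%:~R) ler_int; lia.
Qed.

Lemma exists_nat_ge_mul (r d : rat) : 0 < d -> exists M : nat, r <= M%:R * d.
Proof.
move=> d0; have [r0|r0] := lerP r 0; first by exists 0%N; rewrite mul0r.
have := @archi_boundP _ (r / d) (ltW (divr_gt0 r0 d0)).
by move=> h; exists (Num.Def.archi_bound (r / d)); rewrite -ler_pdivrMr // ltW.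
Qed.

Definition pow_tuple (E : fieldType) (w : E) N : N.-tuple E := [tuple w ^+ i | i < N].

Lemma pow_tuple_nth (E : fieldType) (w : E) N (i : 'I_N) : (pow_tuple w N)`_i = w ^+ i.
Proof. by rewrite -tnth_nth tnth_mktuple. Qed.

Section PowerBasis.
Variables (K : fieldType) (E : fieldExtType K) (v : E -> rat).
Hypothesis hv : is_valuation v.
Hypothesis v_int : forall a : K, a != 0 -> exists z : int, v a%:A = z%:~R.
Variables (w : E) (N : nat).
Hypotheses (nw : w != 0) (vw : v w = N%:R^-1).

Lemma alg_neq0 (a : K) : a != 0 -> (a%:A : E) != 0.
Proof. by move=> h; rewrite scaler_eq0 oner_eq0 orbF. Qed.

Lemma val_scale_pow (a : K) i : a != 0 -> v (a *: w ^+ i) = v a%:A + i%:R / N%:R.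
Proof.
move=> na; rewrite -(mulr_algl a (w ^+ i)) (vM hv) ?alg_neq0 ?expf_neq0 //.
by rewrite (vX hv) // vw.
Qed.

(* The terms of a combination of [1, w, ..., w^(N-1)] have valuations with
   pairwise distinct fractional parts, so the valuation of the sum is the least
   of them. *)
Lemma val_pow_comb (k : 'I_N -> K) (i0 : 'I_N) : k i0 != 0 ->
  \sum_(i < N) k i *: w ^+ i != 0 /\
  exists2 i : 'I_N, k i != 0 &
    v (\sum_(i < N) k i *: w ^+ i) = v (k i)%:A + i%:R / N%:R /\
    forall j : 'I_N, k j != 0 -> v (\sum_(i < N) k i *: w ^+ i) <= v (k j)%:A + j%:R / N%:R.
Proof.
move=> ki0; set r := [seq i <- index_enum 'I_N | k i != 0].
have -> : \sum_(i < N) k i *: w ^+ i = \sum_(i <- r) k i *: w ^+ i.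
  by rewrite big_filter; apply/esym/big_rmcond => i /negPn/eqP ->; rewrite scale0r.
have memr i : (i \in r) = (k i != 0) by rewrite mem_filter mem_index_enum andbT.
have [] := @val_sum_min _ _ hv _ r (fun i => k i *: w ^+ i).
- by rewrite filter_uniq ?index_enum_uniq.
- by apply/eqP => r0; move: (memr i0); rewrite r0 in_nil ki0.
- by move=> i; rewrite memr => ki; rewrite scaler_eq0 negb_or ki expf_neq0.
- move=> i j; rewrite !memr => ki kj; rewrite !val_scale_pow //.
  have [zi ->] := v_int ki; have [zj ->] := v_int kj.
  by move/intr_frac_inj => /(_ (ltn_ord i) (ltn_ord j)) /val_inj.
move=> ns [i ir [vs hmin]]; split=> //; exists i; first by rewrite -memr.
split; first by rewrite vs val_scale_pow // -memr.
by move=> j kj; rewrite vs -!val_scale_pow // -?memr //; apply: hmin; rewrite memr.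
Qed.

Lemma sum_coord_pow_tuple (k : 'I_N -> K) :
  \sum_(i < N) k i *: (pow_tuple w N)`_i = \sum_(i < N) k i *: w ^+ i.
Proof. by apply: eq_bigr => i _; rewrite pow_tuple_nth. Qed.

Lemma free_pow_tuple : free (pow_tuple w N).
Proof.
apply/freeP => k hk i; apply/eqP; apply: contraT => ki.
by have [] := val_pow_comb ki; rewrite -sum_coord_pow_tuple hk eqxx.
Qed.

Lemma dim_ge_pow (F : {subfield E}) : w \in F -> (N <= \dim F)%N.
Proof.
move=> wF; have := free_pow_tuple; rewrite /free size_tuple => /eqP <-.
by apply: dimvS; apply/span_subvP => x /mapP [i _ ->]; apply: rpredX.
Qed.

Section FieldOfDegreeN.
Variable F : {subfield E}.
Hypotheses (wF : w \in F) (dimF : \dim F = N).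

Lemma basis_pow_tuple : basis_of F (pow_tuple w N).
Proof.
rewrite basisEfree free_pow_tuple size_tuple dimF leqnn andbT /=.
by apply/span_subvP => x /mapP [i _ ->]; apply: rpredX.
Qed.

Lemma coord_pow_tupleE y : y \in F ->
  y = \sum_(i < N) coord (pow_tuple w N) i y *: w ^+ i.
Proof. by move=> yF; rewrite -sum_coord_pow_tuple -(coord_basis basis_pow_tuple yF). Qed.

Lemma val_mem_pow_field y : y \in F -> y != 0 ->
  exists (z : int) (i : nat), (i < N)%N /\ v y = z%:~R + i%:R / N%:R.
Proof.
move=> yF ny; have yE := coord_pow_tupleE yF.
have [i0 ki0] : exists i, coord (pow_tuple w N) i y != 0.
  apply/existsP; apply: contraNT ny; rewrite negb_exists => /forallP k0.
  by rewrite yE big1 // => i _; rewrite (eqP (negPn (k0 i))) scale0r.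
have [_ [i ki [vs _]]] := @val_pow_comb (fun i => coord (pow_tuple w N) i y) _ ki0.
have [z hz] := v_int ki.
by exists z, i; split=> //; rewrite yE vs hz.
Qed.

Lemma val_ge_coord y r (i : 'I_N) : y \in F -> val_ge v y r ->
  val_ge v (coord (pow_tuple w N) i y)%:A (r - 1).
Proof.
move=> yF hy; have [ki0|ki] := eqVneq (coord (pow_tuple w N) i y) 0.
  by left; rewrite ki0 scale0r.
have yE := coord_pow_tupleE yF.
have [ns [_ _ [_ hmin]]] := @val_pow_comb (fun i => coord (pow_tuple w N) i y) _ ki.
case: hy => [y0|hy]; first by move: ns; rewrite -yE y0 eqxx.
have iN : (i%:R / N%:R : rat) <= 1.
  by rewrite ler_pdivrMr ?ltr0n ?(leq_ltn_trans _ (ltn_ord i)) // mul1r ler_nat ltnW.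
by right; have := hmin i ki; rewrite -yE; lra.
Qed.

Lemma uniformizer_pow_field : uniformizer v F w.
Proof.
have N0 : (0 < N)%N by rewrite -dimF adim_gt0.
split=> //; first by rewrite vw invr_gt0 ltr0n.
move=> y yF hy; exists (y / w); first by rewrite rpredM ?rpredV.
split; last by rewrite mulrC divfK.
have [->|ny] := eqVneq y 0; first by left; rewrite mul0r.
case: hy => [y0|hy]; first by move: ny; rewrite y0 eqxx.
have [z [i [iN vy]]] := val_mem_pow_field yF ny.
apply: val_geW (val_ge_div hv (val_ge_val v y) nw) _.
by rewrite vw subr_ge0 vy intr_frac_ge_inv // -vy.
Qed.

End FieldOfDegreeN.
End PowerBasis.

Section Completeness.
Variables (K : fieldType) (E : fieldExtType K) (v : E -> rat).
Hypothesis hv : is_valuation v.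

Definition complete_in (F : {subfield E}) := forall u : nat -> E,
  (forall i, u i \in F) -> v_cauchy v u -> exists2 l, l \in F & v_converges_to v u l.

Hypothesis complete_K : forall u : nat -> K, v_cauchy v (fun i => (u i)%:A) ->
  exists l : K, v_converges_to v (fun i => (u i)%:A) l%:A.

Lemma complete_base : complete_in 1%AS.
Proof.
move=> u u1 cauchy_u.
have /all_sig [b ub] : forall i, {k : K | u i = k%:A}.
  by move=> i; apply: constructive_indefinite_description; apply/vlineP; apply: u1.
have [|l hl] := complete_K (u := b).
  by move=> r; have [M hM] := cauchy_u r; exists M => i j hi hj; rewrite -!ub; apply: hM.
exists l%:A; first by apply/vlineP; exists l.
by move=> r; have [M hM] := hl r; exists M => i hi; rewrite ub; apply: hM.
Qed.

Hypothesis v_int : forall a : K, a != 0 -> exists z : int, v a%:A = z%:~R.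

(* Coordinates in the basis [1, w, ..., w^(N-1)] lose at most 1 in valuation,
   so they converge coordinatewise in the complete field [K]. *)
Lemma complete_pow_field (F : {subfield E}) (w : E) (N : nat) :
  w != 0 -> v w = N%:R^-1 -> w \in F -> \dim F = N -> complete_in F.
Proof.
move=> nw vw wF dimF u uF cauchy_u; set X := pow_tuple w N.
pose c k j := coord X j (u k).
have /all_sig [l hl] : forall j, {l : K | v_converges_to v (fun k => (c k j)%:A) l%:A}.
  move=> j; apply: constructive_indefinite_description; apply: complete_K => r.
  have [M hM] := cauchy_u (r + 1); exists M => i k hi hk; rewrite -scalerBl -raddfB /=.
  have := val_ge_coord hv v_int nw vw wF dimF j (rpredB (uF i) (uF k)) (hM i k hi hk).
  by rewrite addrK.
have X_int (j : 'I_N) : val_ge v X`_j 0.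
  by rewrite pow_tuple_nth; right; rewrite (vX hv) // vw mulr_ge0 ?invr_ge0.
exists (\sum_j l j *: X`_j).
  by apply: rpred_sum => j _; rewrite rpredZ // pow_tuple_nth rpredX.
move=> r; have /all_sig [M hM] : forall j, {M : nat | forall k, (M <= k)%N ->
    val_ge v ((c k j)%:A - (l j)%:A) r}.
  by move=> j; apply: constructive_indefinite_description; apply: hl.
exists (\max_j M j) => k hk.
rewrite {1}(coord_basis (basis_pow_tuple hv v_int nw vw wF dimF) (uF k)).
rewrite -sumrB; apply: (val_ge_sum hv) => j _; rewrite -scalerBl -mulr_algl scalerBl.
apply: (val_geMr hv _ (X_int j)); exact: (hM j k (leq_trans (leq_bigmax j) hk)).
Qed.

End Completeness.

Section Hensel.
Variables (K : fieldType) (E : fieldExtType K) (v : E -> rat).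
Hypothesis hv : is_valuation v.
Variables (F : {subfield E}) (e : nat) (u : E) (d : rat).
Hypotheses (complete_F : complete_in v F) (ne : (e%:R : E) != 0) (ve : v e%:R = 0).
Hypotheses (uF : u \in F) (d0 : 0 < d) (u1 : val_ge v (u - 1) d).

(* Since [e] is a unit, the simplified Newton iteration [x -> x + (u - x^e)/e]
   already gains [d] in precision at each step. *)
Fixpoint root_approx k := if k is k'.+1
  then root_approx k' + (u - root_approx k' ^+ e) / e%:R else 1.

Lemma root_approx_mem k : root_approx k \in F.
Proof.
elim: k => [|k ih] /=; first exact: rpred1.
by rewrite rpredD // rpredM ?rpredV ?rpredB ?rpredX ?rpred_nat.
Qed.

Lemma root_approx_spec k :
  val_ge v (root_approx k - 1) d /\ val_ge v (u - root_approx k ^+ e) (k.+1%:R * d).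
Proof.
elim: k => [|k [x1 err]] /=; first by rewrite subrr expr1n mul1r; split=> //; left.
set x : E := root_approx k; set eps : E := u - x ^+ e; set x' : E := x + eps / e%:R.
have heps : val_ge v (eps / e%:R) (k.+1%:R * d).
  by have := val_ge_div hv err ne; rewrite ve subr0.
have kd : d <= k.+1%:R * d by rewrite -[X in X <= _]mul1r ler_pM2r // ler1n.
have x'1 : val_ge v (x' - 1) d.
  by rewrite /x' addrAC; exact: (val_geD hv x1 (val_geW heps kd)).
split=> //.
have -> : u - x' ^+ e = eps / e%:R * (e%:R - \sum_(i < e) x' ^+ (e.-1 - i) * x ^+ i).
  have hx : x' ^+ e - x ^+ e = eps / e%:R * \sum_(i < e) x' ^+ (e.-1 - i) * x ^+ i.
    by rewrite subrXX /x' [x + _]addrC addrK.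
  by rewrite mulrBr divfK // -hx /eps; ring.
have -> : k.+2%:R * d = k.+1%:R * d + d :> rat by rewrite -[k.+2]addn1 natrD mulrDl mul1r.
apply: (val_geM hv heps).
have -> : (e%:R : E) = \sum_(i < e) 1 by rewrite sumr_const card_ord.
rewrite -sumrB.
apply: (val_ge_sum hv) => i _; rewrite -opprB; apply: (val_geN hv).
by apply: (val_ge_1unitM hv (ltW d0)); apply: (val_ge_1unitX hv _ (ltW d0)).
Qed.

Lemma root_approx_cauchy : v_cauchy v root_approx.
Proof.
have step k : val_ge v (root_approx k.+1 - root_approx k) (k.+1%:R * d).
  by rewrite /= addrC addKr; have := val_ge_div hv (root_approx_spec k).2 ne; rewrite ve subr0.
move=> r; have [M hM] := exists_nat_ge_mul r d0; exists M => i j hi hj.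
have hr m : (M <= m)%N -> r <= m.+1%:R * d.
  by move=> hm; apply: le_trans hM (ler_wpM2r (ltW d0) _); rewrite ler_nat leqW.
have [ij|ji] := leqP i j.
  rewrite -opprB; apply: (val_geN hv).
  exact: (val_geW (val_ge_telescope hv (ltW d0) ij step) (hr i hi)).
exact: (val_geW (val_ge_telescope hv (ltW d0) (ltnW ji) step) (hr j hj)).
Qed.

Lemma hensel_root : exists2 y, y \in F & y ^+ e = u /\ val_ge v (y - 1) d.
Proof.
have [y yF lim_y] := complete_F root_approx_mem root_approx_cauchy.
have y1 : val_ge v (y - 1) d.
  have [M hM] := lim_y d; have -> : y - 1 = (root_approx M - 1) - (root_approx M - y) by ring.
  by apply: (val_geB hv); [exact: (root_approx_spec M).1 | exact: hM M (leqnn M)].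
exists y => //; split=> //; apply/eqP; rewrite -subr_eq0; apply/eqP; apply: val_ge_eq0 => r.
have [M1 hM1] := lim_y r; have [M2 hM2] := exists_nat_ge_mul r d0.
pose x := root_approx (maxn M1 M2).
have -> : y ^+ e - u = - (x ^+ e - y ^+ e) - (u - x ^+ e) by ring.
have x_int : val_ge v x 0 := val_ge0_1unit hv (ltW d0) (root_approx_spec _).1.
have y_int : val_ge v y 0 := val_ge0_1unit hv (ltW d0) y1.
apply: (val_geB hv).
  exact: (val_geN hv (val_ge_subX hv e x_int y_int (hM1 _ (leq_maxl _ _)))).
apply: (val_geW (root_approx_spec _).2 (le_trans hM2 (ler_wpM2r (ltW d0) _))).
by rewrite ler_nat leqW // leq_maxr.
Qed.

End Hensel.

Section PowerSeries.
Variable K : fieldType.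

Lemma coef0X (P : {poly K}) k : (P ^+ k)`_0 = P`_0 ^+ k.
Proof. by rewrite -!horner_coef0 horner_exp. Qed.

Lemma ps_exp_coef (P : {poly K}) e k : ps_exp (fun i => P`_i) e k = (P ^+ e)`_k.
Proof.
elim: e k => [|e ih] k; first by rewrite expr0 coef1.
by rewrite exprS coefM; apply: eq_bigr => i _; rewrite -ih.
Qed.

Lemma eq_ps_exp (f g : nat -> K) e k : (forall i, (i <= k)%N -> f i = g i) ->
  ps_exp f e k = ps_exp g e k.
Proof.
elim: e k => [|e ih] k fg //; apply: eq_bigr => i _.
rewrite fg; last by rewrite -ltnS.
congr (_ * _); apply: ih => j jk.
by apply: fg; apply: leq_trans jk (leq_subr _ _).
Qed.

Lemma sum_subst_pow (F : nat -> K) e J (R : comNzRingType) (f : K -> R) (x : R) :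
  (0 < e)%N -> f 0 = 0 ->
  \sum_(k < e * J) f (ps_subst_pow F e k) * x ^+ k = \sum_(j < J) f (F j) * (x ^+ e) ^+ j.
Proof.
case: e => // e _ f0; elim: J => [|J ih]; first by rewrite muln0 !big_ord0.
rewrite mulnS addnC big_split_ord /= ih [RHS]big_ord_recr /=; congr (_ + _).
rewrite big_ord_recl big1 ?addr0.
  by rewrite /ps_subst_pow /= addn0 dvdn_mulr // mulKn // -exprM mulnC.
move=> i _; rewrite /ps_subst_pow /=.
have : ~~ (e.+1 %| e.+1 * J + i.+1)%N.
  rewrite dvdn_addr ?dvdn_mulr //; apply/negP => /dvdn_leq.
  by have := ltn_ord i; lia.
by move/negbTE => ->; rewrite f0 mul0r.
Qed.

End PowerSeries.

(* The e-th root of [F(X^e)] for [F = X^n * (F_n + F_(n+1) X + ...)], computed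
   as [X^n Q] where [Q^e = F(X^e) / X^(ne)] is solved degree by degree from
   [Q_0 = c], a root of [F_n]; each step divides by [e c^(e-1)]. *)
Section PowerSeriesRoot.
Variables (K : fieldType) (F : nat -> K) (e n : nat) (c : K).
Hypotheses (e0 : (0 < e)%N) (ceF : c ^+ e = F n) (dc : e%:R * c ^+ e.-1 != 0).
Hypothesis F_lt_n : forall i, (i < n)%N -> F i = 0.

Definition subst_pow_shift m := ps_subst_pow F e (n * e + m).

Definition root_poly_step (Q : {poly K}) k :=
  (subst_pow_shift k.+1 - (Q ^+ e)`_k.+1) / (e%:R * c ^+ e.-1).

Fixpoint root_poly k : {poly K} :=
  if k is k'.+1 then root_poly k' + root_poly_step (root_poly k') k' *: 'X^(k'.+1) else c%:P.

Lemma size_root_poly k : (size (root_poly k) <= k.+1)%N.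
Proof.
elim: k => [|k ih] /=; first by rewrite size_polyC; case: (c != 0).
apply: leq_trans (size_polyD _ _) _; rewrite geq_max (leq_trans ih) //=.
by apply: leq_trans (size_scale_leq _ _) _; rewrite size_polyXn.
Qed.

Lemma root_poly_coef_gt k m : (k < m)%N -> (root_poly k)`_m = 0.
Proof. by move=> km; apply: nth_default; apply: leq_trans (size_root_poly k) km. Qed.

Lemma root_poly_coef_stable k m : (m <= k)%N -> (root_poly k)`_m = (root_poly m)`_m.
Proof.
move=> /subnK <-; elim: (k - m)%N => [|d ih] //.
rewrite addSn /= coefD coefZ coefXn ih.
rewrite (_ : (m == (d + m).+1) = false) ?mulr0 ?addr0 //.
by apply/negbTE; rewrite neq_ltn ltnS leq_addl.
Qed.

Lemma root_poly_coef0 k : (root_poly k)`_0 = c.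
Proof. by elim: k => [|k ih] /=; rewrite ?coefC // coefD coefZ coefXn mulr0 addr0. Qed.

Lemma root_poly_coef_last k : (root_poly k.+1)`_k.+1 = root_poly_step (root_poly k) k.
Proof. by rewrite /= coefD coefZ coefXn eqxx mulr1 root_poly_coef_gt // add0r. Qed.

Lemma root_poly_exp k m : (m <= k)%N -> (root_poly k ^+ e)`_m = subst_pow_shift m.
Proof.
elim: k m => [|k ih] m.
  rewrite leqn0 => /eqP ->.
  by rewrite /= coef0X coefC /= ceF /subst_pow_shift /ps_subst_pow addn0 dvdn_mull // mulnK.
set Q := root_poly k; set g := root_poly_step Q k.
have -> : root_poly k.+1 ^+ e = Q ^+ e + g *: ('X^(k.+1) *
    \sum_(i < e) root_poly k.+1 ^+ (e.-1 - i) * Q ^+ i).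
  have dQ : root_poly k.+1 - Q = g *: 'X^(k.+1) by rewrite /= [Q + _]addrC addrK.
  by rewrite scalerAl -dQ -subrXX addrC subrK.
rewrite leq_eqVlt coefD coefZ coefXnM => /orP [/eqP ->|lt_mk]; last first.
  by rewrite lt_mk mulr0 addr0 ih.
rewrite ltnn subnn coef_sum.
have -> : \sum_(i < e) (root_poly k.+1 ^+ (e.-1 - i) * Q ^+ i)`_0 = e%:R * c ^+ e.-1.
  rewrite (eq_bigr (fun=> c ^+ e.-1)); first by rewrite sumr_const card_ord mulr_natl.
  move=> i _; rewrite coef0M !coef0X root_poly_coef0 /Q root_poly_coef0 -exprD subnK //.
  by rewrite -ltnS prednK.
by rewrite /g /root_poly_step divfK // addrC subrK.
Qed.

Definition root_series i := if (i < n)%N then 0 else (root_poly (i - n))`_(i - n).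

Lemma coef_root_series_poly N i : (i <= n + N)%N -> ('X^n * root_poly N)`_i = root_series i.
Proof.
move=> iN; rewrite coefXnM /root_series; case: ifP => // _.
by rewrite root_poly_coef_stable // leq_subLR.
Qed.

Lemma ps_exp_root_series k : ps_exp root_series e k = ps_subst_pow F e k.
Proof.
rewrite (@eq_ps_exp _ _ (fun i => ('X^n * root_poly k)`_i)); last first.
  by move=> i ik; rewrite coef_root_series_poly // (leq_trans ik) // leq_addl.
rewrite ps_exp_coef exprMn -exprM coefXnM; case: ifP => kn.
  rewrite /ps_subst_pow; case: ifP => // _; rewrite F_lt_n //.
  by rewrite ltn_divLR // mulnC.
by rewrite root_poly_exp ?leq_subr // /subst_pow_shift subnKC // leqNgt kn.
Qed.

End PowerSeriesRoot.

Lemma succ_div_mul_le (n e : nat) : (0 < n)%N -> (0 < e)%N ->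
  n.+1%:R * (n * e)%:R^-1 <= e%:R^-1 + n%:R^-1 :> rat.
Proof.
move=> n0 e0; have e1 : (1 : rat) <= e%:R by rewrite ler1n.
have -> : n.+1%:R * (n * e)%:R^-1 = e%:R^-1 + (n%:R * e%:R)^-1 :> rat.
  by rewrite natrM -addn1 natrD; field; rewrite !pnatr_eq0 -!lt0n e0 n0.
by rewrite lerD2l invfM -[X in _ <= X]mulr1 ler_wpM2l ?invr_ge0 // invf_le1 ?ltr0n.
Qed.

Lemma val_ge_coef_exp (K : fieldType) (E : fieldExtType K) (v : E -> rat) :
  is_valuation v -> forall (P : {poly K}) k i, (forall j, val_ge v (P`_j)%:A 0) ->
  val_ge v ((P ^+ k)`_i)%:A 0.
Proof.
move=> hv P k i P_int; elim: k i => [|k ih] i.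
  by rewrite expr0 coef1 scaler_nat; apply: val_ge_nat.
rewrite exprS coefM scaler_suml; apply: (val_ge_sum hv) => j _.
by rewrite -scalerA -mulr_algl; apply: (val_geMr hv (P_int j) (ih _)).
Qed.

Lemma horner_map_alg (K : fieldType) (E : fieldExtType K) (P : {poly K}) (x : E) M :
  (size P <= M)%N -> (map_poly (in_alg E) P).[x] = \sum_(i < M) (P`_i)%:A * x ^+ i.
Proof.
move=> PM; rewrite (@horner_coef_wide _ M) ?size_map_poly //.
by apply: eq_bigr => i _; rewrite coef_map.
Qed.

Section TameSeriesRoot.
Variables (K : fieldType) (E : fieldExtType K) (v : E -> rat).
Hypothesis hv : is_valuation v.
Hypothesis complete_K : forall u : nat -> K, v_cauchy v (fun i => (u i)%:A) ->
  exists l : K, v_converges_to v (fun i => (u i)%:A) l%:A.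
Variables (n e : nat) (piL piLe piKe : E) (piK : K).
Hypotheses (n0 : (0 < n)%N) (e0 : (0 < e)%N) (ne : (e%:R : E) != 0) (ve : v e%:R = 0).
Hypotheses (npiL : piL != 0) (vpiL : v piL = n%:R^-1).
Hypotheses (npiLe : piLe != 0) (vpiLe : v piLe = (n * e)%:R^-1) (piLe_e : piLe ^+ e = piL).
Hypotheses (npiKe : piKe != 0) (vpiKe : v piKe = e%:R^-1) (piKe_e : piKe ^+ e = piK%:A).
Hypothesis piLe_n : val_ge v (piLe ^+ n - piKe) (e%:R^-1 + n%:R^-1).
Hypothesis piK_piL : val_ge v (piK%:A - piL ^+ n) (n.+1%:R / n%:R).
Variable F : nat -> K.
Hypotheses (F_lt_n : forall i, (i < n)%N -> F i = 0) (F_int : forall i, val_ge v (F i)%:A 0).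
Hypothesis F_piL : v_series_to v (fun i => (F i)%:A * piL ^+ i) piK%:A.

Let inv_n_gt0 : (0 : rat) < n%:R^-1. Proof. by rewrite invr_gt0 ltr0n. Qed.

Lemma lead_coef_1unit : val_ge v ((F n)%:A - 1) n%:R^-1.
Proof.
have [M hM] := F_piL (n.+1%:R / n%:R); have := hM (n.+1 + M)%N (leq_addl _ _).
rewrite big_split_ord /= big_ord_recr /= big1 ?add0r; last first.
  by move=> i _; rewrite F_lt_n // scale0r mul0r.
set R := \sum_(i < M) _ => hS.
have hR : val_ge v R (n.+1%:R / n%:R).
  apply: (val_ge_sum hv) => i _; apply: val_geW (val_ge_mulX hv _ npiL (F_int _)) _.
  by rewrite vpiL ler_wpM2r ?invr_ge0 // ler_nat leq_addr.
have : val_ge v (((F n)%:A - 1) * piL ^+ n) (n.+1%:R / n%:R).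
  have -> : ((F n)%:A - 1) * piL ^+ n =
      ((F n)%:A * piL ^+ n + R - piK%:A) - R + (piK%:A - piL ^+ n) by ring.
  by apply: (val_geD hv) => //; apply: (val_geB hv).
move/(val_ge_div hv)/(_ (expf_neq0 n npiL)); rewrite mulfK ?expf_neq0 // (vX hv) // vpiL.
move/val_geW; apply; rewrite le_eqVlt -addn1 natrD; apply/orP; left; apply/eqP.
by field; rewrite pnatr_eq0 -lt0n.
Qed.

Lemma exists_root_lead : exists2 c : K, c ^+ e = F n & val_ge v (c%:A - 1) n%:R^-1.
Proof.
have FnK : (F n)%:A \in (1%AS : {subfield E}) by apply/vlineP; exists (F n).
have [x /vlineP [c ->] [ce c1]] :=
  hensel_root hv (complete_base complete_K) ne ve FnK inv_n_gt0 lead_coef_1unit.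
by exists c => //; apply: (fmorph_inj (in_alg E)); rewrite rmorphXn.
Qed.

Section WithRoot.
Variable c : K.
Hypotheses (ceF : c ^+ e = F n) (c1 : val_ge v (c%:A - 1) n%:R^-1).

Lemma root_derivative_unit : (e%:R * c ^+ e.-1)%:A != 0 :> E /\ v (e%:R * c ^+ e.-1)%:A = 0.
Proof.
have [nc vc] := val_1unit hv inv_n_gt0 c1.
rewrite -in_algE rmorphM rmorph_nat rmorphXn /=.
by rewrite mulf_neq0 ?expf_neq0 // (vM hv) ?expf_neq0 // ve (vX hv) // vc mulr0 addr0.
Qed.

Lemma root_poly_integral m k : val_ge v ((root_poly F e n c k)`_m)%:A 0.
Proof.
have [nd vd] := root_derivative_unit.
elim/ltn_ind: m k => m ih k; have [km|mk] := ltnP k m.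
  by rewrite root_poly_coef_gt // scale0r; left.
rewrite root_poly_coef_stable //; case: m ih {mk} => [|j] ih.
  by rewrite root_poly_coef0; exact: (val_ge0_1unit hv (ltW inv_n_gt0) c1).
rewrite root_poly_coef_last /root_poly_step -in_algE fmorph_div /=.
have num_int : val_ge v ((subst_pow_shift F e n j.+1 - (root_poly F e n c j ^+ e)`_j.+1)%:A) 0.
  rewrite scalerBl; apply: (val_geB hv).
    rewrite /subst_pow_shift /ps_subst_pow.
    by case: ifP => _; [apply: F_int | rewrite scale0r; left].
  apply: (val_ge_coef_exp hv) => i; have [ij|ji] := leqP i j; first exact: ih.
  by rewrite root_poly_coef_gt // scale0r; left.
by have := val_ge_div hv num_int nd; rewrite vd subr0.
Qed.

Lemma root_series_integral i : val_ge v (root_series F e n c i)%:A 0.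
Proof.
by rewrite /root_series; case: ifP => _; [rewrite scale0r; left | apply: root_poly_integral].
Qed.

Let s M := \sum_(i < M) (root_series F e n c i)%:A * piLe ^+ i.
Let Q N := root_poly F e n c N.

Lemma partial_sum_horner N : s (n + N).+1 = (map_poly (in_alg E) ('X^n * Q N)).[piLe].
Proof.
have sizeP : (size ('X^n * Q N)%R <= (n + N).+1)%N.
  apply: leq_trans (size_polyMleq _ _) _; rewrite size_polyXn.
  by rewrite /Q; have := size_root_poly F e n c N; lia.
rewrite (horner_map_alg piLe sizeP); apply: eq_bigr => i _.
by rewrite coef_root_series_poly // -ltnS.
Qed.

Lemma partial_sum_close N : val_ge v (s (n + N).+1 - piKe) (n.+1%:R * (n * e)%:R^-1).
Proof.
set q := (map_poly (in_alg E) (Q N)).[piLe].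
have sE : s (n + N).+1 = piLe ^+ n * q.
  by rewrite partial_sum_horner rmorphM /= map_polyXn hornerM hornerXn.
have q_c : val_ge v (q - c%:A) (n * e)%:R^-1.
  rewrite /q (horner_map_alg piLe (size_root_poly F e n c N)) big_ord_recl /=.
  rewrite root_poly_coef0 expr0 mulr1 addrAC subrr add0r; apply: (val_ge_sum hv) => i _.
  apply: val_geW (val_ge_mulX hv _ npiLe (root_poly_integral _ _)) _.
  by rewrite vpiLe ler_peMl ?invr_ge0 // ler1n.
have c_int : val_ge v c%:A 0 := val_ge0_1unit hv (ltW inv_n_gt0) c1.
have := succ_div_mul_le n0 e0.
have -> : s (n + N).+1 - piKe =
    piLe ^+ n * (q - c%:A) + (piLe ^+ n - piKe) * c%:A + piKe * (c%:A - 1) by rewrite sE; ring.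
move=> le_bound; apply: (val_geD hv); first apply: (val_geD hv).
- have := val_geM hv (val_ge_val v (piLe ^+ n)) q_c.
  by rewrite (vX hv) // vpiLe -[n.+1]addn1 natrD mulrDl mul1r.
- exact: val_geW (val_geMr hv piLe_n c_int) le_bound.
- by have := val_geM hv (val_ge_val v piKe) c1; rewrite vpiKe => /val_geW; apply.
Qed.

Lemma partial_sum_exp_close N J : (e * J <= (n + N).+1)%N ->
  val_ge v (s (n + N).+1 ^+ e - \sum_(j < J) (F j)%:A * piL ^+ j) (J%:R / n%:R).
Proof.
move=> eJ; set P := ('X^n * Q N)%R.
have P_int j : val_ge v (P`_j)%:A 0.
  by rewrite coefXnM; case: ifP => _; [rewrite scale0r; left | apply: root_poly_integral].
have sizeR : (size (P ^+ e) <= e * J + size (P ^+ e))%N by rewrite leq_addl.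
rewrite partial_sum_horner -/P -horner_exp -rmorphXn (horner_map_alg piLe sizeR) big_split_ord /=.
have -> : \sum_(i < e * J) ((P ^+ e)`_i)%:A * piLe ^+ i = \sum_(j < J) (F j)%:A * piL ^+ j.
  rewrite -piLe_e -(@sum_subst_pow _ F e J _ (fun a : K => a%:A) piLe e0) ?scale0r //.
  apply: eq_bigr => i _; rewrite -ps_exp_coef -(ps_exp_root_series e0 ceF _ F_lt_n).
    congr (_%:A * _); apply: eq_ps_exp => j ji; apply: coef_root_series_poly.
    by have := ltn_ord i; lia.
  by have [+ _] := root_derivative_unit; apply: contraNneq => ->; rewrite scale0r.
rewrite addrAC subrr add0r; apply: (val_ge_sum hv) => i _.
apply: val_geW (val_ge_mulX hv _ npiLe (val_ge_coef_exp hv _ _ P_int)) _.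
have -> : J%:R / n%:R = (e * J)%:R * (n * e)%:R^-1 :> rat.
  by rewrite !natrM; field; rewrite !pnatr_eq0 -!lt0n n0 e0.
by rewrite vpiLe ler_wpM2r ?invr_ge0 // ler_nat leq_addr.
Qed.

Lemma root_series_converges :
  v_series_to v (fun i => (root_series F e n c i)%:A * piLe ^+ i) piKe.
Proof.
move=> r; have [M0 hM0] := F_piL (r + 1); have [J0 hJ0] := exists_nat_ge_mul (r + 1) inv_n_gt0.
set J := maxn M0 J0; exists (maxn n.+1 (e * J)) => M; rewrite geq_max => /andP [nM eJM].
set N := (M - n.+1)%N; have MN : M = (n + N).+1 by rewrite -addSn subnKC.
rewrite -/(s M) MN; rewrite MN in eJM.
have close := partial_sum_close N.
have exp_close : val_ge v (s (n + N).+1 ^+ e - piKe ^+ e) (r + 1).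
  have -> : s (n + N).+1 ^+ e - piKe ^+ e = (s (n + N).+1 ^+ e - \sum_(j < J) (F j)%:A * piL ^+ j)
      + (\sum_(j < J) (F j)%:A * piL ^+ j - piK%:A) by rewrite piKe_e; ring.
  apply: (val_geD hv); last exact: hM0 J (leq_maxl _ _).
  apply: val_geW (partial_sum_exp_close eJM) (le_trans hJ0 _).
  by rewrite ler_wpM2r ?invr_ge0 // ler_nat leq_maxr.
have ratio1 : val_ge v (s (n + N).+1 / piKe - 1) (n * e)%:R^-1.
  apply: val_geW (val_ge_div_sub1 hv npiKe close) _; rewrite vpiKe le_eqVlt; apply/orP; left.
  by apply/eqP; rewrite natrM -addn1 natrD; field; rewrite !pnatr_eq0 -!lt0n n0 e0.
have := val_ge_sub_of_subX hv ne ve npiKe _ ratio1 exp_close.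
rewrite vpiKe divff ?pnatr_eq0 -?lt0n // => /(_ _)/val_geW; apply.
  by rewrite invr_gt0 ltr0n muln_gt0 n0.
have : (0 : rat) <= e%:R^-1 by rewrite invr_ge0.
lra.
Qed.

End WithRoot.

Lemma tame_series_root : exists Fe : nat -> K,
  [/\ forall i, val_ge v (Fe i)%:A 0, ps_exp Fe e = ps_subst_pow F e &
      v_series_to v (fun i => (Fe i)%:A * piLe ^+ i) piKe].
Proof.
have [c ceF c1] := exists_root_lead; have [nd _] := root_derivative_unit c1.
have dc : e%:R * c ^+ e.-1 != 0 by apply: contraNneq nd => ->; rewrite scale0r.
exists (root_series F e n c); split; [exact: root_series_integral | | exact: root_series_converges].
by apply: functional_extensionality => k; apply: ps_exp_root_series.
Qed.

End TameSeriesRoot.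

Lemma coprime_bezout (m k : nat) : (0 < k)%N -> coprime m k ->
  exists a b, (a * k = b * m + 1)%N.
Proof.
move=> k0; rewrite /coprime => /eqP g1.
by case: (egcdnP m k0) => a b hab _; exists a, b; rewrite hab gcdnC g1.
Qed.

Lemma adjoin_degree_le_root (K : fieldType) (E : fieldExtType K) (F : {subfield E}) x e :
  (0 < e)%N -> x ^+ e \in F -> (adjoin_degree F x <= e)%N.
Proof.
move=> e0 xeF; have xe_root : root ('X^e - (x ^+ e)%:P) x by rewrite /root !hornerE subrr.
have xe_over : 'X^e - (x ^+ e)%:P \is a polyOver F by rewrite polyOverXnsubC.
have := dvdp_leq (monic_neq0 (monicXnsubC _ e0)) (minPoly_dvdp xe_over xe_root).
by rewrite size_minPoly size_XnsubC.
Qed.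

Section Uniformizers.
Variables (K : fieldType) (E : fieldExtType K) (v : E -> rat).
Hypothesis hv : is_valuation v.

Lemma uniformizer_val_eq (F : {subfield E}) x y :
  uniformizer v F x -> uniformizer v F y -> v x = v y.
Proof.
have le_val x' y' : uniformizer v F x' -> uniformizer v F y' -> v x' <= v y'.
  move=> [_ nx _ div_x] [yF ny vy _]; have [z _ [[z0|z_ge0] yE]] := div_x _ yF (or_intror vy).
    by move: ny; rewrite yE z0 mulr0 eqxx.
  have nz : z != 0 by apply: contraNneq ny => z0; rewrite yE z0 mulr0.
  by rewrite yE (vM hv) // lerDl.
by move=> ux uy; apply/eqP; rewrite eq_le !le_val.
Qed.

Lemma val_uniformizer_base (piK : K) :
  (forall a : K, a != 0 -> exists z : int, v a%:A = z%:~R) ->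
  (exists a : K, a != 0 /\ v a%:A = 1) ->
  uniformizer v 1%AS piK%:A -> v piK%:A = 1.
Proof.
move=> v_int [a [na va]] [_ npiK vpiK div_piK].
have aK : a%:A \in (1%AS : {subfield E}) by apply/vlineP; exists a.
have [|z _ [z_ge0 aE]] := div_piK _ aK; first by right; rewrite va ltr01.
have nz : z != 0.
  by apply: contraNneq (alg_neq0 E na) => z0; rewrite aE z0 mulr0.
have [k vk] : exists k : int, v piK%:A = k%:~R.
  by apply: v_int; apply: contraNneq npiK => ->; rewrite scale0r.
case: z_ge0 => [z0|z_ge0]; first by move: nz; rewrite z0 eqxx.
have : (k%:~R : rat) <= (1 : int)%:~R by rewrite -vk -va aE (vM hv) // lerDl.
have : ((0 : int)%:~R : rat) < k%:~R by rewrite -vk.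
by rewrite ltr_int ler_int vk => k0 k1; rewrite (_ : k = 1) //; lia.
Qed.

Lemma val_uniformizer_ramified (L : {subfield E}) n piL piK :
  (0 < n)%N -> totally_ramified v 1%AS L n ->
  uniformizer v L piL -> uniformizer v 1%AS piK -> v piK = 1 -> v piL = n%:R^-1.
Proof.
move=> n0 [_ _ [pi1 [pi2 [u1 u2 v12]]]] uL uK vpiK.
rewrite (uniformizer_val_eq u2 uL) (uniformizer_val_eq u1 uK) vpiK in v12.
have nR : (n%:R : rat) != 0 by rewrite pnatr_eq0 -lt0n.
by apply: (mulfI nR); rewrite -v12 divff.
Qed.

Lemma val_ge_congr (F : {subfield E}) x y m : congr_mod v F x y m -> val_ge v (x - y) (v m).
Proof. by case=> z _ [z_ge0 ->]; apply: (val_geMr hv (val_ge_val v m) z_ge0). Qed.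

End Uniformizers.

Section TameConstruction.
Variables (K : fieldType) (E : fieldExtType K) (v : E -> rat).
Hypothesis hv : is_valuation v.
Hypothesis v_int : forall a : K, a != 0 -> exists z : int, v a%:A = z%:~R.
Variables (L : {subfield E}) (n e : nat) (piL piKe y : E) (piK : K) (a b : nat).
Hypotheses (n0 : (0 < n)%N) (e0 : (0 < e)%N) (dimL : \dim L = n).
Hypotheses (piL_L : piL \in L) (npiL : piL != 0) (vpiL : v piL = n%:R^-1).
Hypotheses (vpiK : v piK%:A = 1) (piKe_e : piKe ^+ e = piK%:A).
Hypotheses (yL : y \in L) (y_e : y ^+ e = piK%:A / piL ^+ n) (y1 : val_ge v (y - 1) n%:R^-1).
Hypothesis bezout : (a * n = b * e + 1)%N.
Hypothesis complete_K : forall u : nat -> K, v_cauchy v (fun i => (u i)%:A) ->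
  exists l : K, v_converges_to v (fun i => (u i)%:A) l%:A.
Hypotheses (ne : (e%:R : E) != 0) (ve : v e%:R = 0).

Let Ke : {subfield E} := <<1%AS; piKe>>%AS.
Let Le : {subfield E} := (L * Ke)%AS.

(* Using [y^e = piK / piL^n] and [a n = b e + 1], its e-th power is
   [piL^(an - be) = piL] and its n-th power is
   [piKe^(be+1) / (y^(be+1) piL^(bn)) = piKe / y]. *)
Definition root_uniformizer := piKe ^+ a / (y ^+ a * piL ^+ b).
Let piLe := root_uniformizer.

Let inv_n_gt0 : (0 : rat) < n%:R^-1. Proof. by rewrite invr_gt0 ltr0n. Qed.

Lemma root_neq0 : y != 0. Proof. exact: (val_1unit hv inv_n_gt0 y1).1. Qed.

Lemma piKe_neq0 : piKe != 0.
Proof.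
apply: contraTneq (expf_neq0 e root_neq0) => piKe0.
by rewrite y_e -piKe_e piKe0 expr0n eqn0Ngt e0 mul0r eqxx.
Qed.

Lemma val_piKe : v piKe = e%:R^-1.
Proof.
have eR : (e%:R : rat) != 0 by rewrite pnatr_eq0 -lt0n.
by apply: (mulfI eR); rewrite -(vX hv) ?piKe_neq0 // piKe_e vpiK divff.
Qed.

Lemma piK_neq0 : (piK%:A : E) != 0.
Proof. by rewrite -piKe_e expf_neq0 ?piKe_neq0. Qed.

Lemma root_uniformizer_exp_e : piLe ^+ e = piL.
Proof.
have npiK := piK_neq0.
have Xae x : (x ^+ a) ^+ e = (x ^+ e) ^+ a by rewrite -!exprM mulnC.
rewrite /piLe /root_uniformizer expr_div_n exprMn !Xae piKe_e y_e exprMn -!exprM.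
rewrite exprVn -exprM [(n * a)%N]mulnC bezout exprD expr1; field.
by rewrite npiL !expf_neq0.
Qed.

Lemma root_uniformizer_exp_n : piLe ^+ n = piKe / y.
Proof.
have Xbe x : x ^+ (b * e) = (x ^+ e) ^+ b by rewrite mulnC exprM.
rewrite /piLe /root_uniformizer expr_div_n exprMn -!exprM bezout !exprD !expr1 !Xbe piKe_e y_e.
rewrite expr_div_n -exprM mulnC; field.
by rewrite root_neq0 !expf_neq0 ?piK_neq0.
Qed.

Lemma root_uniformizer_neq0 : piLe != 0.
Proof.
by apply: contraNneq npiL => piLe0; rewrite -root_uniformizer_exp_e piLe0 expr0n gtn_eqF.
Qed.

Lemma val_root_uniformizer : v piLe = (n * e)%:R^-1.
Proof.
have eR : (e%:R : rat) != 0 by rewrite pnatr_eq0 -lt0n.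
apply: (mulfI eR); rewrite -(vX hv) ?root_uniformizer_neq0 // root_uniformizer_exp_e vpiL.
by rewrite natrM invfM mulrCA divff ?mulr1.
Qed.

Lemma mem_root_uniformizer : piLe \in Le.
Proof.
have KeLe : (Ke <= Le)%VS := field_subvMl L Ke.
have LLe : (L <= Le)%VS := field_subvMr L Ke.
rewrite rpredM ?rpredV ?rpredX //; first exact: (subvP KeLe _ (memv_adjoin _ _)).
by rewrite rpredM ?rpredX //; apply: (subvP LLe).
Qed.

Lemma dim_adjoin_root : \dim Ke = e.
Proof.
apply/eqP; rewrite eqn_leq; apply/andP; split.
  rewrite dim_Fadjoin dimv1 muln1 adjoin_degree_le_root // piKe_e.
  by apply/vlineP; exists piK.
exact: (dim_ge_pow hv v_int piKe_neq0 val_piKe (memv_adjoin _ _)).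
Qed.

Lemma dim_compositum : \dim Le = (n * e)%N.
Proof.
apply/eqP; rewrite eqn_leq; apply/andP; split; last first.
  exact: (dim_ge_pow hv v_int root_uniformizer_neq0 val_root_uniformizer mem_root_uniformizer).
have sub : (Le <= <<L; piKe>>%AS)%VS.
  by apply: prodv_sub; [exact: subv_adjoin | apply: adjoinSl; exact: sub1v].
apply: leq_trans (dimvS sub) _; rewrite dim_Fadjoin dimL mulnC leq_pmul2l //.
by rewrite adjoin_degree_le_root // piKe_e rpredZ // mem1v.
Qed.

Lemma totally_ramified_adjoin_root :
  uniformizer v 1%AS piK%:A -> totally_ramified v 1%AS Ke e.
Proof.
move=> upiK; split; [exact: sub1v | by rewrite dim_adjoin_root dimv1 divn1 |].
exists piK%:A, piKe; split=> //.
  exact: (uniformizer_pow_field hv v_int piKe_neq0 val_piKe (memv_adjoin _ _) dim_adjoin_root).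
by rewrite val_piKe vpiK divff // pnatr_eq0 -lt0n.
Qed.

Lemma uniformizer_compositum : uniformizer v Le piLe.
Proof.
exact: (uniformizer_pow_field hv v_int root_uniformizer_neq0 val_root_uniformizer
  mem_root_uniformizer dim_compositum).
Qed.

Lemma totally_ramified_compositum :
  uniformizer v L piL -> totally_ramified v L Le e.
Proof.
move=> upiL; split; [exact: field_subvMr | by rewrite dim_compositum dimL mulKn |].
exists piL, piLe; split=> //; first exact: uniformizer_compositum.
rewrite val_root_uniformizer vpiL natrM invfM mulrCA divff ?mulr1 //.
by rewrite pnatr_eq0 -lt0n.
Qed.

Lemma root_uniformizer_exp_n_close : val_ge v (piLe ^+ n - piKe) (e%:R^-1 + n%:R^-1).
Proof.
have -> : piLe ^+ n - piKe = piKe * (1 - y) / y.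
  by rewrite root_uniformizer_exp_n; field; rewrite root_neq0.
have y1' : val_ge v (1 - y) n%:R^-1 by rewrite -opprB; apply: (val_geN hv).
have := val_ge_div hv (val_geM hv (val_ge_val v piKe) y1') root_neq0.
by rewrite (val_1unit hv inv_n_gt0 y1).2 subr0 val_piKe.
Qed.

Lemma congr_root_uniformizer : congr_mod v Le (piLe ^+ n) piKe (piLe ^+ n.+1).
Proof.
have npiLe := root_uniformizer_neq0.
exists ((piLe ^+ n - piKe) / piLe ^+ n.+1).
  by rewrite rpredM ?rpredV ?rpredB ?rpredX // ?mem_root_uniformizer //;
    apply: (subvP (field_subvMl L Ke)); apply: memv_adjoin.
split; last by rewrite mulrC divfK // expf_neq0.
have := val_ge_div hv root_uniformizer_exp_n_close (expf_neq0 n.+1 npiLe).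
rewrite (vX hv) // val_root_uniformizer => /val_geW; apply; rewrite subr_ge0.
exact: succ_div_mul_le.
Qed.

Lemma tame_extension : uniformizer v L piL -> uniformizer v 1%AS piK%:A ->
  congr_mod v L piK%:A (piL ^+ n) (piL ^+ n.+1) ->
  (totally_ramified v 1%AS Ke e /\ totally_ramified v L Le e) /\
  exists piLe : E,
    [/\ uniformizer v Le piLe, piLe ^+ e = piL,
        congr_mod v Le (piLe ^+ n) piKe (piLe ^+ n.+1) &
        forall F : nat -> K,
          (forall i, (i < n)%N -> F i = 0) ->
          (forall i, val_ge v (F i)%:A 0) ->
          v_series_to v (fun i => (F i)%:A * piL ^+ i) piK%:A ->
          exists Fe : nat -> K,
            [/\ forall i, val_ge v (Fe i)%:A 0,
                ps_exp Fe e = ps_subst_pow F e &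
                v_series_to v (fun i => (Fe i)%:A * piLe ^+ i) piKe]].
Proof.
move=> upiL upiK cong; split.
  by split; [apply: totally_ramified_adjoin_root | apply: totally_ramified_compositum].
exists piLe; split.
- exact: uniformizer_compositum.
- exact: root_uniformizer_exp_e.
- exact: congr_root_uniformizer.
move=> F F_lt_n F_int F_piL.
have piK_piL : val_ge v (piK%:A - piL ^+ n) (n.+1%:R / n%:R).
  by have := val_ge_congr hv cong; rewrite (vX hv) // vpiL.
exact: (tame_series_root hv complete_K n0 e0 ne ve npiL vpiL root_uniformizer_neq0
  val_root_uniformizer root_uniformizer_exp_e piKe_neq0 val_piKe piKe_e
  root_uniformizer_exp_n_close piK_piL F_lt_n F_int F_piL).
Qed.

End TameConstruction.

Unset Implicit Arguments.

Theorem lemma2p8 (p : nat) (K : fieldType) (E : fieldExtType K) (v : E -> rat)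
  (L : {subfield E}) (n : nat) (piL : E) (piK : K) (e : nat) (piKe : E) :
  prime p ->
  complete_dvf_perfect_residue v p ->
  separable 1%VS L ->
  \dim L = n -> (1 < n)%N ->
  totally_ramified v 1%AS L n ->
  uniformizer v L piL ->
  uniformizer v 1%AS piK%:A ->
  congr_mod v L piK%:A (piL ^+ n) (piL ^+ n.+1) ->
  (1 <= e)%N -> coprime e (p * n) ->
  piKe ^+ e = piK%:A ->
  let Ke : {subfield E} := <<1%AS; piKe>>%AS in
  let Le : {subfield E} := (L * Ke)%AS in
  (totally_ramified v 1%AS Ke e /\ totally_ramified v L Le e) /\
  exists piLe : E,
    [/\ uniformizer v Le piLe, piLe ^+ e = piL,
        congr_mod v Le (piLe ^+ n) piKe (piLe ^+ n.+1) &
        forall F : nat -> K,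
          (forall i, (i < n)%N -> F i = 0) ->
          (forall i, val_ge v (F i)%:A 0) ->
          v_series_to v (fun i => (F i)%:A * piL ^+ i) piK%:A ->
          exists Fe : nat -> K,
            [/\ forall i, val_ge v (Fe i)%:A 0,
                ps_exp Fe e = ps_subst_pow F e &
                v_series_to v (fun i => (Fe i)%:A * piLe ^+ i) piKe]].
Proof.
move=> _ [hv [v_int v_norm] complete_K p_gt0 _] _ dimL n1 ramL upiL upiK cong e0 cop piKe_e.
have n0 : (0 < n)%N := ltnW n1.
have [cop_ep cop_en] : coprime e p /\ coprime e n by apply/andP; rewrite -coprimeMr.
have vpiK := val_uniformizer_base hv v_int v_norm upiK.
have [piL_L npiL _ _] := upiL.
have vpiL := val_uniformizer_ramified hv n0 ramL upiL upiK vpiK.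
have [ne ve] := val_nat_coprime hv e0 cop_ep p_gt0.
have u1 : val_ge v (piK%:A / piL ^+ n - 1) n%:R^-1.
  have := val_ge_div_sub1 hv (expf_neq0 n npiL) (val_ge_congr hv cong).
  by rewrite !(vX hv) // vpiL => /val_geW; apply; rewrite -mulrBl -natrB // subSnn mul1r.
have inv_n_gt0 : (0 : rat) < n%:R^-1 by rewrite invr_gt0 ltr0n.
have uL : piK%:A / piL ^+ n \in L by rewrite rpredM ?rpredV ?rpredX // rpredZ // mem1v.
have complete_L := complete_pow_field hv complete_K v_int npiL vpiL piL_L dimL.
have [y yL [y_e y1]] := hensel_root hv complete_L ne ve uL inv_n_gt0 u1.
have [a [b bezout]] := coprime_bezout n0 cop_en.
exact: (tame_extension hv v_int n0 e0 dimL piL_L npiL vpiL vpiK piKe_e yL y_e y1 bezout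
  complete_K ne ve upiL upiK cong).
Qed.
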